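(* Let $d\geq 1$. For every integer $m\geq 2$ there exists a finite set $S$ of unit $m$-gons in $\mathbb{R}^d$ such that the hypergraph $\mathcal{H}(S)$, with vertex set $\mathbb{R}^d$ and edge set $\{X\subseteq\mathbb{R}^d\mid X \text{ is congruent in } \mathbb{R}^d \text{ to some element of } S\}$, is equivalent to the Euclidean unit distance graph on $\mathbb{R}^d$.
   Context: $\mathbb{R}^d$ carries the Euclidean norm; two subsets are congruent if one is the image of the other under a Euclidean isometry. An $m$-gon is any subset of $\mathbb{R}^d$ of cardinality exactly $m$; a unit $m$-gon is an $m$-gon containing at least one pair of points at Euclidean distance $1$. The Euclidean unit distance graph on $\mathbb{R}^d$ has vertex set $\mathbb{R}^d$ and edges the pairs $\{x,y\}$ with $\|x-y\|_2=1$. A hypergraph is a pair $(V,E)$ with $E$ a set of subsets of $V$ each of size at least $2$; a proper coloring $\varphi:V\to C$ makes no edge monochromatic; $\chi$ is the least $|C|$ admitting a proper coloring. Two hypergraphs $\mathcal{H},\mathcal{G}$ on the same vertex set are equivalent if $\chi(\mathcal{H})=\chi(\mathcal{G})$ and, for every set $C$ of that cardinality, a map $\varphi$ into $C$ is a proper coloring of $\mathcal{H}$ iff it is a proper coloring of $\mathcal{G}$. *)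

From HB Require Import structures.
From mathcomp Require Import all_boot all_order all_algebra.
From mathcomp Require Import boolp classical_sets reals.
Set Implicit Arguments. Unset Strict Implicit. Unset Printing Implicit Defensive.
Import Order.TTheory GRing.Theory Num.Theory.
Local Open Scope ring_scope.
Local Open Scope classical_set_scope.

Notation pt R d := 'rV[R]_d.

Definition enorm (R : realType) (d : nat) (x : pt R d) : R :=
  Num.sqrt (\sum_(i < d) (x 0 i) ^+ 2).
Definition edist (R : realType) (d : nat) (x y : pt R d) : R := enorm (x - y).

Definition isometry (R : realType) (d : nat) (g : pt R d -> pt R d) : Prop :=
  forall x y, edist (g x) (g y) = edist x y.

Definition congruent (R : realType) (d : nat) (X Y : set (pt R d)) : Prop :=
  exists g, isometry g /\ g @` Y = X.

Definition m_gon (R : realType) (d m : nat) (X : set (pt R d)) : Prop :=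
  exists f : 'I_m -> pt R d, injective f /\ X = range f.

Definition unit_m_gon (R : realType) (d m : nat) (X : set (pt R d)) : Prop :=
  m_gon m X /\ exists x y, X x /\ X y /\ edist x y = 1.

Definition hypergraph (V : Type) := set (set V).

Definition monochromatic (V C : Type) (phi : V -> C) (X : set V) : Prop :=
  forall x y, X x -> X y -> phi x = phi y.

Definition proper_coloring (V C : Type) (E : hypergraph V) (phi : V -> C) : Prop :=
  forall X, E X -> ~ monochromatic phi X.

Definition colorable (V : Type) (E : hypergraph V) (n : nat) : Prop :=
  exists phi : V -> 'I_n, proper_coloring E phi.

Definition chromatic_number (V : Type) (E : hypergraph V) (n : nat) : Prop :=
  colorable E n /\ forall k, colorable E k -> (n <= k)%N.

Definition equivalent (V : Type) (H G : hypergraph V) : Prop :=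
  exists n, chromatic_number H n /\ chromatic_number G n /\
    forall (C : finType), #|C| = n ->
      forall phi : V -> C, proper_coloring H phi <-> proper_coloring G phi.

Definition unit_distance_graph (R : realType) (d : nat) : hypergraph (pt R d) :=
  [set X | exists x y, edist x y = 1 /\ X = [set x; y]].

Definition H_of (R : realType) (d : nat) (S : seq (set (pt R d))) :
  hypergraph (pt R d) :=
  [set X | exists2 Y, Y \in S & congruent X Y].

From Pilot Require Import Defs.
From HB Require Import structures.
From mathcomp Require Import all_boot all_order all_algebra.
From mathcomp Require Import boolp classical_sets reals.
From mathcomp Require Import topology discrete_topology cardinality.
From mathcomp Require Import ring lra zify.
Set Implicit Arguments. Unset Strict Implicit. Unset Printing Implicit Defensive.
Import Order.TTheory GRing.Theory Num.Theory.
Local Open Scope ring_scope.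
Local Open Scope classical_set_scope.

(* Let n be the chromatic number of the unit distance graph G of R^d (finite, by a grid
   coloring); by de Bruijn-Erdos some finite W in R^d is not (n-1)-colorable. Take 0, a unit
   vector e and many pairwise disjoint translates of W along e, and let S list the unit m-gons
   of this finite configuration. An n-coloring giving 0 and e the same color has a
   monochromatic member of S: either m-2 copies of W are properly colored, and then each of
   them uses every color, that of 0 in particular; or, by pigeonhole, m-1 copies contain
   monochromatic unit pairs of one common color. As an isometry maps 0, e onto any unit pair,
   proper n-colorings of H(S) are proper colorings of G; the converse holds because every
   member of S contains a unit pair. *)

(* [all_algebra] exports an unrelated [isometry] of bilinear forms. *)
Local Notation isometry := Defs.isometry.

Section DotProduct.
Variables (R : realDomainType) (d : nat).
Implicit Types (x y z : 'rV[R]_d).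

Definition dot x y : R := \sum_(i < d) x 0 i * y 0 i.

Lemma dotC x y : dot x y = dot y x.
Proof. by apply: eq_bigr => i _; rewrite mulrC. Qed.

Lemma dotDl x y z : dot (x + y) z = dot x z + dot y z.
Proof. by rewrite /dot -big_split; apply: eq_bigr => i _; rewrite !mxE mulrDl. Qed.

Lemma dotNl x z : dot (- x) z = - dot x z.
Proof. by rewrite /dot -sumrN; apply: eq_bigr => i _; rewrite !mxE mulNr. Qed.

Lemma dotBl x y z : dot (x - y) z = dot x z - dot y z.
Proof. by rewrite dotDl dotNl. Qed.

Lemma dotZl (a : R) x z : dot (a *: x) z = a * dot x z.
Proof. by rewrite /dot mulr_sumr; apply: eq_bigr => i _; rewrite !mxE mulrA. Qed.

Lemma dotBr x y z : dot z (x - y) = dot z x - dot z y.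
Proof. by rewrite dotC dotBl !(dotC z). Qed.

Lemma dotZr (a : R) x z : dot z (a *: x) = a * dot z x.
Proof. by rewrite dotC dotZl dotC. Qed.

Lemma dot0l z : dot 0 z = 0.
Proof. by rewrite /dot big1 // => i _; rewrite mxE mul0r. Qed.

Lemma dotNN x y : dot (- x) (- y) = dot x y.
Proof. by rewrite dotNl dotC dotNl dotC opprK. Qed.

Lemma sqr_coord_le_dot x i : x 0 i ^+ 2 <= dot x x.
Proof.
rewrite /dot (bigD1 i) //= expr2 lerDl.
by apply: sumr_ge0 => j _; rewrite -expr2 sqr_ge0.
Qed.

Lemma dot_ge0 x : 0 <= dot x x.
Proof. by apply: sumr_ge0 => i _; rewrite -expr2 sqr_ge0. Qed.

Lemma dot_eq0 x : dot x x = 0 -> x = 0.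
Proof.
move=> x0; apply/rowP => i; rewrite mxE; apply/eqP.
by rewrite -sqrf_eq0 eq_le sqr_ge0 andbT -x0 sqr_coord_le_dot.
Qed.

Lemma dot_delta i : dot (delta_mx 0 i) (delta_mx 0 i) = 1.
Proof.
rewrite /dot (bigD1 i) //= big1 => [|j /negPf ji]; first by rewrite mxE !eqxx mulr1 addr0.
by rewrite mxE ji andbF mul0r.
Qed.

End DotProduct.

Section Reflection.
Variables (R : realFieldType) (d : nat).
Implicit Types (w x y z : 'rV[R]_d).

Definition reflection w z := z - (2 * dot z w / dot w w) *: w.

Lemma reflection0 w : reflection w 0 = 0.
Proof. by rewrite /reflection dot0l mulr0 mul0r scale0r subr0. Qed.

Lemma reflectionB w x y : reflection w x - reflection w y = reflection w (x - y).
Proof.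
rewrite /reflection dotBl mulrBr mulrBl scalerBl.
by apply/rowP => i; rewrite !mxE; ring.
Qed.

Lemma dot_reflection w z : dot (reflection w z) (reflection w z) = dot z z.
Proof.
rewrite /reflection !(dotBl, dotBr, dotZl, dotZr) (dotC w z).
have [->|w0] := eqVneq (dot w w) 0; first by rewrite invr0 !mulr0 !mul0r !subr0.
by field.
Qed.

Lemma reflection_swap x y : dot x x = dot y y -> reflection (x - y) x = y.
Proof.
move=> xy; have [xy0|xy0] := eqVneq (x - y) 0.
  by rewrite /reflection xy0 scaler0 subr0; apply/eqP; rewrite -subr_eq0 xy0.
rewrite /reflection; have -> : 2 * dot x (x - y) = dot (x - y) (x - y).
  by rewrite !(dotBl, dotBr) xy (dotC y x); ring.
have w0 : dot (x - y) (x - y) != 0 by apply: contra_neq xy0; exact: dot_eq0.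
by rewrite divff // scale1r opprB addrC subrK.
Qed.

End Reflection.

Section Euclidean.
Variables (R : realType) (d : nat).
Notation V := (pt R d).
Implicit Types (a x y : V).

Lemma edistE x y : edist x y = Num.sqrt (dot (x - y) (x - y)).
Proof. by rewrite /edist /enorm; congr Num.sqrt; apply: eq_bigr => i _; rewrite expr2. Qed.

Lemma edist_eq1 x y : edist x y = 1 <-> dot (x - y) (x - y) = 1.
Proof.
rewrite edistE; split => [xy1|->]; last exact: sqrtr1.
by rewrite -(sqr_sqrtr (dot_ge0 (x - y))) xy1 expr1n.
Qed.

Lemma edist_eq1_neq x y : edist x y = 1 -> x != y.
Proof.
move=> /edist_eq1 xy1; apply/eqP => exy.
by move: xy1; rewrite exy subrr dot0l => /eqP; rewrite eq_sym oner_eq0.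
Qed.

Lemma edist0_delta (i : 'I_d) : edist 0 (delta_mx 0 i : V) = 1.
Proof. by apply/edist_eq1; rewrite sub0r dotNN dot_delta. Qed.

Lemma edistDr t x y : edist (x + t) (y + t) = edist x y.
Proof. by rewrite /edist opprD addrACA subrr addr0. Qed.

Lemma exists_isometry_pair a x y : dot a a = dot (y - x) (y - x) ->
  exists g, isometry g /\ g 0 = x /\ g a = y.
Proof.
move=> axy; exists (fun z => reflection (a - (y - x)) z + x); split; last split.
- move=> u v /=.
  by rewrite !edistE [reflection _ v + x]addrC addrKA reflectionB dot_reflection.
- by rewrite reflection0 add0r.
- by rewrite reflection_swap // subrK.
Qed.

Lemma proper_unit_distanceP (C : Type) (phi : V -> C) :
  proper_coloring (@unit_distance_graph R d) phi <->
  forall x y, edist x y = 1 -> phi x <> phi y.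
Proof.
split=> [proper_phi x y xy1 phixy|proper_phi _ [x [y [xy1 ->]]] mono].
  apply: (proper_phi [set x; y]); first by exists x, y.
  by move=> u v [->|->] [->|->].
by apply: (proper_phi x y xy1); apply: mono; [left|right].
Qed.

Definition proper_on (C : Type) (phi : V -> C) (s : seq V) :=
  forall x y, x \in s -> y \in s -> edist x y = 1 -> phi x <> phi y.

Lemma not_proper_onP (C : Type) (phi : V -> C) (s : seq V) : ~ proper_on phi s ->
  exists x y, [/\ x \in s, y \in s, edist x y = 1 & phi x = phi y].
Proof.
move=> not_proper; apply: contrapT => no_pair; apply: not_proper => x y xs ys xy1 same.
by apply: no_pair; exists x, y.
Qed.

Lemma proper_H_of_unit_m_gons (m : nat) (S : seq (set V)) (C : Type) (phi : V -> C) :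
  (forall Y, Y \in S -> unit_m_gon m Y) ->
  proper_coloring (@unit_distance_graph R d) phi -> proper_coloring (H_of S) phi.
Proof.
move=> S_unit /proper_unit_distanceP phi_proper X [Y YS [g [g_iso gY]]] X_mono.
have [_ [u [v [Yu [Yv uv1]]]]] := S_unit Y YS.
apply: (phi_proper (g u) (g v)); first by rewrite g_iso.
by apply: X_mono; rewrite -gY; [exists u|exists v].
Qed.

Lemma colorable_unit_distance_gt1 n : (0 < d)%N ->
  colorable (@unit_distance_graph R d) n -> (1 < n)%N.
Proof.
move=> d_gt0 [c /proper_unit_distanceP c_proper]; rewrite ltnNge; apply/negP => n_le1.
apply: (c_proper _ _ (edist0_delta (Ordinal d_gt0))); apply: ord_inj.
by have := ltn_ord (c 0); have := ltn_ord (c (delta_mx 0 (Ordinal d_gt0) : V)); lia.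
Qed.

Lemma unit_m_gon_seq (m : nat) (s : seq V) :
  uniq s -> size s = m -> (exists x y, [/\ x \in s, y \in s & edist x y = 1]) ->
  unit_m_gon m [set` s].
Proof.
move=> s_uniq s_size [x [y [xs ys xy1]]]; split; last by exists x, y.
have lt_s (i : 'I_m) : (i < size s)%N by rewrite s_size.
exists (fun i => nth 0 s i); split.
  by move=> i j /eqP; rewrite nth_uniq // => /eqP/val_inj.
apply/seteqP; split=> [v /= vs|_ [i _ <-]]; last exact: mem_nth.
have iv : (index v s < m)%N by rewrite -s_size index_mem.
by exists (Ordinal iv); rewrite //= nth_index.
Qed.

End Euclidean.

Section Hypergraphs.
Variable V : Type.
Implicit Types (E H G : hypergraph V).

Lemma colorable_card E (C : finType) (phi : V -> C) :
  proper_coloring E phi -> colorable E #|C|.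
Proof.
move=> proper_phi; exists (enum_rank \o phi) => X EX mono.
by apply: (proper_phi X EX) => x y Xx Xy; apply: enum_rank_inj; exact: mono.
Qed.

Lemma exists_chromatic_number E k : colorable E k -> exists n, chromatic_number E n.
Proof.
move=> Ek; have ex : exists k, `[< colorable E k >] by exists k; apply/asboolP.
exists (ex_minn ex); case: ex_minnP => n /asboolP En n_min; split=> // j Ej.
by apply: n_min; apply/asboolP.
Qed.

Lemma equivalent_of_proper H G n : chromatic_number G n ->
  (forall (C : Type) (phi : V -> C), proper_coloring G phi -> proper_coloring H phi) ->
  (forall (C : finType) (phi : V -> C), (#|C| <= n)%N ->
     proper_coloring H phi -> proper_coloring G phi) ->
  equivalent H G.
Proof.
move=> Gn GH HG; have [[c Gc] G_min] := Gn; exists n; split; [split|split].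
- by exists c; exact: GH.
- move=> k [c' Hc']; have [//|kn] := leqP n k.
  have Gk : colorable G #|'I_k|.
    by apply: colorable_card (HG _ c' _ Hc'); rewrite card_ord ltnW.
  by move: (G_min _ Gk); rewrite card_ord leqNgt kn.
- by [].
- by move=> C Cn phi; split; [apply: HG; rewrite Cn|exact: GH].
Qed.
End Hypergraphs.

Lemma injective_off_point (C : finType) (n : nat) (c0 : C) : (#|C| <= n.+2)%N ->
  exists f : C -> 'I_n.+1, {in predC1 c0 &, injective f}.
Proof.
move=> C_le; have le_n : (#|C|.-1 <= n.+1)%N by lia.
exists (fun c => odflt ord0 (omap (widen_ord le_n) (unlift (enum_rank c0) (enum_rank c)))).
move=> c c'; rewrite !inE => cc0 c'c0.
case: unliftP => [i ci|/enum_rank_inj c0c]; last by rewrite c0c eqxx in cc0.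
case: unliftP => [i' c'i' /= /(congr1 val) /= /val_inj ii'|/enum_rank_inj c0c'].
  by apply: enum_rank_inj; rewrite ci c'i' ii'.
by rewrite c0c' eqxx in c'c0.
Qed.

Lemma uniq_seq_of_card_ge (T : finType) (A : {set T}) n : (n <= #|A|)%N ->
  exists J : seq T, [/\ uniq J, size J = n & {subset J <= A}].
Proof.
move=> nA; exists (take n (enum A)); split.
- by rewrite take_uniq ?enum_uniq.
- by rewrite size_takel // -cardE.
- by move=> j /mem_take; rewrite mem_enum.
Qed.

Lemma pigeonhole_card (I C : finType) (f : I -> C) (A : {set I}) n :
  (#|C| * n < #|A|)%N -> exists c, (n < #|[set i in A | f i == c]|)%N.
Proof.
move=> CA; apply: contrapT => no_c.
have : (#|A| <= #|C| * n)%N; last by lia.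
have -> : #|A| = (\sum_(c : C) #|[set i in A | f i == c]|)%N.
  rewrite -sum1_card (partition_big f predT) //=; apply: eq_bigr => c _.
  by rewrite -sum1_card; apply: eq_bigl => i; rewrite !inE.
rewrite -sum_nat_const; apply: leq_sum => c _; rewrite leqNgt; apply/negP => nc.
by apply: no_c; exists c.
Qed.

Definition subsets_of (T : eqType) (s : seq T) : seq (set T) :=
  [seq [set v | exists2 i, i \in J & v = tnth (in_tuple s) i]
    | J : {set 'I_(size s)} <- enum {set 'I_(size s)}].

Lemma mem_subsets_of (T : eqType) (s : seq T) (Y : set T) :
  Y `<=` [set` s] -> Y \in subsets_of s.
Proof.
move=> Ys; apply/mapP; exists [set i | `[< Y (tnth (in_tuple s) i) >]]%SET.
  by rewrite mem_enum.
apply/seteqP; split=> [v Yv|_ [i] /[!inE] /asboolP Yi ->] //=.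
have vs : v \in s := Ys _ Yv.
have iv : (index v s < size s)%N by rewrite index_mem.
exists (Ordinal iv); last by rewrite (tnth_nth v) nth_index.
by rewrite inE; apply/asboolP; rewrite (tnth_nth v) nth_index.
Qed.

Lemma floor_eq_of_eqmod (R : archiRealFieldType) (c : nat) (a b : R) :
  `|a - b| <= c%:R -> (Num.floor a = Num.floor b %[mod c.+1])%Z ->
  Num.floor a = Num.floor b.
Proof.
move=> ab /eqP; rewrite eqz_mod_dvd => /dvdzP [q fab].
have /andP[la ua] := floor_itv a; have /andP[lb ub] := floor_itv b.
move: ab; rewrite ler_norml => /andP[ab_lo ab_hi].
have z_lt : ((Num.floor a - Num.floor b)%:~R : R) < (c.+1%:Z)%:~R.
  by rewrite intrB -[c.+1%:~R]/(c.+1%:R) -natr1; move: ua lb; rewrite !intrD; lra.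
have z_gt : ((- c.+1%:Z)%:~R : R) < (Num.floor a - Num.floor b)%:~R.
  by rewrite intrB mulrNz -[c.+1%:~R]/(c.+1%:R) -natr1; move: ub la; rewrite !intrD; lra.
rewrite ltr_int fab in z_lt; rewrite ltr_int fab in z_gt.
have q0 : q = 0 by nia.
by apply/eqP; rewrite -subr_eq0 fab q0 mul0r.
Qed.

Lemma floor_eq_lt1 (R : archiRealFieldType) (a b : R) :
  Num.floor a = Num.floor b -> `|a - b| < 1.
Proof.
move=> fab; have /andP[la ua] := floor_itv a; have /andP[lb ub] := floor_itv b.
move: ua ub; rewrite fab !intrD => ua ub; move: la; rewrite fab => la.
by rewrite ltr_norml; apply/andP; split; lra.
Qed.

Section GridColoring.
Variables (R : realType) (d : nat).
Notation V := (pt R d).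

(* Cells have side 1/d, so points of one cell are at distance < 1, while points at distance
   1 lie at most d cells apart in each coordinate: reducing mod d+1 keeps them apart. *)
Definition grid_cell (x : V) (i : 'I_d) : int := Num.floor (d%:R * x 0 i).

Definition grid_color (x : V) : {ffun 'I_d -> 'I_d.+1} :=
  [ffun i => inord `|(grid_cell x i %% d.+1)%Z|%N].

Lemma grid_color_eqmod x y i : grid_color x = grid_color y ->
  (grid_cell x i = grid_cell y i %[mod d.+1])%Z.
Proof.
move=> /ffunP /(_ i); rewrite !ffunE => /(congr1 (@nat_of_ord _)).
have mod_lt z : (`|(z %% d.+1)%Z|%N < d.+1)%N.
  by rewrite -ltz_nat gez0_abs ?modz_ge0 ?ltz_pmod.
by rewrite !inordK ?mod_lt // => /(congr1 Posz); rewrite !gez0_abs ?modz_ge0.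
Qed.

Lemma grid_color_proper x y : (0 < d)%N -> edist x y = 1 -> grid_color x != grid_color y.
Proof.
move=> d_gt0 /edist_eq1 xy1; apply/eqP => same.
have d_ge1 : 1 <= d%:R :> R by rewrite ler1n.
have close i : (d%:R * (x - y) 0 i) ^+ 2 < 1.
  have := sqr_coord_le_dot (x - y) i; rewrite xy1 !mxE => sqr_le1.
  have : `|d%:R * x 0 i - d%:R * y 0 i| < 1.
    apply/floor_eq_lt1/(floor_eq_of_eqmod _ (grid_color_eqmod i same)).
    by rewrite ler_norml; apply/andP; split; nra.
  by rewrite ltr_norml => /andP[? ?]; nra.
have : \sum_(i < d) (d%:R * (x - y) 0 i) ^+ 2 < \sum_(i < d) 1.
  by apply: ltr_sum => [|i _]; [by apply/hasP; exists (Ordinal d_gt0)|exact: close].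
rewrite sumr_const card_ord.
under eq_bigr do rewrite exprMn expr2.
by rewrite -mulr_sumr -/(dot _ _) xy1; nra.
Qed.

Lemma unit_distance_graph_colorable : (0 < d)%N ->
  colorable (@unit_distance_graph R d) (d.+1 ^ d).
Proof.
move=> d_gt0; have -> : (d.+1 ^ d)%N = #|{ffun 'I_d -> 'I_d.+1}|.
  by rewrite card_ffun !card_ord.
apply: (colorable_card (phi := grid_color)); apply/proper_unit_distanceP => x y xy1.
by apply/eqP; exact: grid_color_proper.
Qed.

End GridColoring.

Definition colorings (V : Type) (n : nat) : Type :=
  prod_topology (fun _ : V => discrete_topology 'I_n.+1).
HB.instance Definition _ V n := Topological.on (colorings V n).
(* [compact_In0] is stated for pointed spaces. *)
HB.instance Definition _ V n := isPointed.Build (colorings V n) (fun _ => ord0).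

Lemma compact_colorings (V : eqType) n : compact [set: colorings V n].
Proof.
have := @tychonoff V (fun _ => discrete_topology 'I_n.+1) (fun _ => setT)
  (fun _ => @finite_compact (discrete_topology 'I_n.+1) _ (@finite_finset 'I_n.+1 setT)).
by congr compact; rewrite predeqE.
Qed.

Lemma closed_distinct_colors (V : eqType) n (a b : V) :
  closed [set c : colorings V n | c a <> c b].
Proof.
rewrite closedE => c near_eq cab; apply: near_eq.
have near_a : \forall c' \near c, c' a = c a.
  exact: (@proj_continuous V (fun _ => discrete_topology 'I_n.+1) a c) _ (discrete_set1 _).
have near_b : \forall c' \near c, c' b = c b.
  exact: (@proj_continuous V (fun _ => discrete_topology 'I_n.+1) b c) _ (discrete_set1 _).
by near=> c'; apply; rewrite (near near_a c') ?(near near_b c') ?cab.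
Unshelve. all: by end_near.
Qed.

Theorem de_bruijn_erdos (V : choiceType) n (adj : V -> V -> Prop) :
  (forall s : seq V, exists c : V -> 'I_n.+1,
     forall x y, x \in s -> y \in s -> adj x y -> c x <> c y) ->
  exists c : V -> 'I_n.+1, forall x y, adj x y -> c x <> c y.
Proof.
move=> finitely_colorable.
have := @compact_colorings V n; rewrite compact_In0.
move=> /(_ _ [set p : V * V | adj p.1 p.2]
          (fun p => [set c : colorings V n | c p.1 <> c p.2])) [].
- exists (fun p => [set c : colorings V n | c p.1 <> c p.2]) => p _.
    exact: closed_distinct_colors.
  by rewrite setTI.
- move=> D D_adj.
  have [c c_proper] :=
    finitely_colorable (flatten [seq [:: p.1; p.2] | p <- finmap.enum_fset D]).
  exists c => p pD; have := D_adj _ pD; rewrite in_setE => adj_p.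
  apply: c_proper adj_p; apply/flattenP; exists [:: p.1; p.2]; rewrite ?map_f //.
  + by rewrite inE eqxx.
  + by rewrite !inE eqxx orbT.
- by move=> c c_proper; exists c => x y; exact: (c_proper (x, y)).
Qed.

Lemma finite_uncolorable_subset (R : realType) (d n : nat) :
  ~ colorable (@unit_distance_graph R d) n.+1 ->
  exists W : seq (pt R d), forall psi : pt R d -> 'I_n.+1, ~ proper_on psi W.
Proof.
move=> not_colorable; apply: contrapT => all_colorable; apply: not_colorable.
have [c c_proper] : exists c : pt R d -> 'I_n.+1, forall x y, edist x y = 1 -> c x <> c y.
  apply: de_bruijn_erdos => s; apply: contrapT => no_c; apply: all_colorable.
  by exists s => psi psi_proper; apply: no_c; exists psi.
by exists c; apply/proper_unit_distanceP.
Qed.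

Section Configuration.
Variables (R : realType) (d : nat) (i0 : 'I_d) (k m : nat) (W : seq (pt R d)).
Notation V := (pt R d).
Hypothesis W_uncolorable : forall psi : V -> 'I_k.+1, ~ proper_on psi W.
Hypothesis m_ge2 : (2 <= m)%N.

Lemma all_colors_on (C : finType) (psi : V -> C) : (#|C| <= k.+2)%N ->
  proper_on psi W -> forall c, exists2 w, w \in W & psi w = c.
Proof.
move=> C_le psi_proper c; apply: contrapT => c_missed.
have [f f_inj] := injective_off_point c C_le.
have psi_neq w : w \in W -> psi w \in predC1 c.
  by move=> wW; rewrite !inE; apply/eqP => psi_w; apply: c_missed; exists w.
apply: (W_uncolorable (psi := f \o psi)) => x y xW yW xy1 /= /f_inj.
by move=> /(_ (psi_neq _ xW) (psi_neq _ yW)); exact: psi_proper.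
Qed.

Local Notation e := (delta_mx 0 i0 : V).

Definition radius : R := \big[Num.max/0]_(w <- W) `|w 0 i0|.
Definition spread : R := 2 * radius + 2.
(* With fewer than m-2 properly colored copies, more than (k+2)(m-2) copies are left for the
   pigeonhole on k+2 colors. *)
Definition copies : nat := (k.+3 * (m - 2))%N.
Definition copy (j : 'I_copies) (w : V) : V := w + (j.+1%:R * spread) *: e.
Definition config : seq V :=
  0 :: e :: [seq copy j w | j <- enum 'I_copies, w <- W].
Definition config_gons : seq (set V) := [seq Y <- subsets_of config | `[< unit_m_gon m Y >]].

Lemma radius_ge0 : 0 <= radius.
Proof. exact: bigmax_ge_id. Qed.

Lemma coord_le_radius w : w \in W -> `|w 0 i0| <= radius.
Proof. by move=> wW; rewrite /radius (le_bigmax_seq _ _ _ _ wW). Qed.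

Lemma copy_coord j w : copy j w 0 i0 = w 0 i0 + j.+1%:R * spread.
Proof. by rewrite !mxE !eqxx mulr1. Qed.

Lemma copy_inj j j' w w' : w \in W -> w' \in W -> copy j w = copy j' w' -> j = j'.
Proof.
move=> wW w'W /(congr1 (fun v : V => v 0 i0)); rewrite !copy_coord /spread => same.
have := coord_le_radius wW; have := coord_le_radius w'W; rewrite !ler_norml.
move=> /andP[? ?] /andP[? ?]; have r0 := radius_ge0.
rewrite -!natr1 in same.
apply/val_inj/eqP; rewrite eqn_leq; apply/andP.
by split; rewrite -ltnS -(ltr_nat R) -natr1; nra.
Qed.

Lemma copy_coord_gt1 j w : w \in W -> 1 < copy j w 0 i0.
Proof.
move=> wW; rewrite copy_coord /spread; have r0 := radius_ge0.
have := coord_le_radius wW; rewrite ler_norml => /andP[? ?].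
have : 1 <= j.+1%:R :> R by rewrite ler1n.
nra.
Qed.

Lemma copy_in_config (j : 'I_copies) w : w \in W -> copy j w \in config.
Proof.
move=> wW; rewrite /config !in_cons; apply/orP; right; apply/orP; right.
by apply/allpairsP; exists (j, w); rewrite mem_enum.
Qed.

Lemma config_gons_unit X : X \in config_gons -> unit_m_gon m X.
Proof. by rewrite mem_filter => /andP[/asboolP]. Qed.

Lemma mem_config_gons_copies (p q : V) (J : seq 'I_copies) (a : 'I_copies -> V) :
  p \in config -> q \in config -> edist p q = 1 ->
  uniq J -> size J = (m - 2)%N -> {in J, forall j, a j \in W} ->
  p \notin [seq copy j (a j) | j <- J] -> q \notin [seq copy j (a j) | j <- J] ->
  [set` p :: q :: [seq copy j (a j) | j <- J]] \in config_gons.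
Proof.
move=> p_conf q_conf pq1 J_uniq J_size aW p_new q_new.
rewrite mem_filter; apply/andP; split.
  apply/asboolP; apply: unit_m_gon_seq; last by exists p, q; rewrite !inE !eqxx orbT.
    rewrite /= inE negb_or edist_eq1_neq //= p_new q_new.
    by rewrite map_inj_in_uniq // => j jp jJ jpJ; exact: copy_inj (aW _ jJ) (aW _ jpJ).
  by rewrite /= size_map J_size; lia.
apply: mem_subsets_of => v /=; rewrite !inE => /orP[/eqP->|/orP[/eqP->|]] //.
by case/mapP => j jJ ->; apply/copy_in_config/aW.
Qed.

Definition good_copies (C : Type) (psi : V -> C) : {set 'I_copies} :=
  [set j | `[< proper_on (psi \o copy j) W >]].

Lemma monochromatic_of_good_copies (C : finType) (psi : V -> C) :
  (#|C| <= k.+2)%N -> psi 0 = psi e -> (m - 2 <= #|good_copies psi|)%N ->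
  exists2 Y, Y \in config_gons & monochromatic psi Y.
Proof.
move=> C_le psi_0e many_good.
have color_0 j : exists w, j \in good_copies psi -> w \in W /\ psi (copy j w) = psi 0.
  have [|_] := boolP (j \in good_copies psi); last by exists 0.
  rewrite inE => /asboolP j_good.
  by have [w wW psi_w] := all_colors_on C_le j_good (psi 0); exists w.
have [a a_good] := choice color_0.
have [J [J_uniq J_size J_good]] := uniq_seq_of_card_ge many_good.
have aW : {in J, forall j, a j \in W} by move=> j /J_good/a_good[].
have small (v : V) : v 0 i0 <= 1 -> v \notin [seq copy j (a j) | j <- J].
  move=> v_small; apply/mapP => -[j /aW ajW v_copy].
  by have := copy_coord_gt1 j ajW; rewrite -v_copy ltNge v_small.
pose s := 0 :: e :: [seq copy j (a j) | j <- J].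
exists [set` s].
  apply: mem_config_gons_copies => //.
  - exact: mem_head.
  - by rewrite !inE eqxx orbT.
  - exact: edist0_delta.
  - by apply: small; rewrite mxE.
  - by apply: small; rewrite mxE !eqxx.
have color_of v : v \in s -> psi v = psi 0.
  rewrite !inE => /orP[/eqP->|/orP[/eqP->|/mapP[j /J_good/a_good[_ psi_j] ->]]] //.
by move=> u v /color_of-> /color_of->.
Qed.

Lemma bad_copies_same_color (C : finType) (psi : V -> C) :
  (#|C| <= k.+2)%N -> (#|good_copies psi| < m - 2)%N ->
  exists B (JB : {set 'I_copies}) (pr : 'I_copies -> V * V), (m - 2 < #|JB|)%N /\
    forall j, j \in JB -> [/\ (pr j).1 \in W, (pr j).2 \in W, edist (pr j).1 (pr j).2 = 1,
      psi (copy j (pr j).1) = B & psi (copy j (pr j).2) = B].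
Proof.
move=> C_le few_good.
have pair_of j : exists pr : V * V, j \notin good_copies psi ->
    [/\ pr.1 \in W, pr.2 \in W, edist pr.1 pr.2 = 1 & psi (copy j pr.1) = psi (copy j pr.2)].
  have [_|] := boolP (j \in good_copies psi); first by exists (0, 0).
  rewrite inE => /asboolP/not_proper_onP[x [y [xW yW xy1 same]]].
  by exists (x, y).
have [pr pr_bad] := choice pair_of.
pose color j := psi (copy j (pr j).1).
have [B many_B] : exists B, (m - 2 < #|[set j in ~: good_copies psi | color j == B]|)%N.
  apply: pigeonhole_card; have := cardsC (good_copies psi); rewrite card_ord.
  have : copies = (m - 2 + k.+2 * (m - 2))%N by rewrite /copies mulSn.
  have := leq_mul C_le (leqnn (m - 2)); lia.
exists B, [set j in ~: good_copies psi | color j == B], pr; split=> // j.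
rewrite inE finset.in_setC => /andP[/pr_bad[xW yW xy1 same] /eqP color_j].
by split=> //; rewrite -same.
Qed.

Lemma monochromatic_of_bad_copies (C : finType) (psi : V -> C) :
  (#|C| <= k.+2)%N -> (#|good_copies psi| < m - 2)%N ->
  exists2 Y, Y \in config_gons & monochromatic psi Y.
Proof.
move=> C_le few_good.
have [B [JB [pr [many_B JB_mono]]]] := bad_copies_same_color C_le few_good.
have [j0 j0B] : exists j0, j0 \in JB by apply/set0Pn; rewrite -card_gt0; lia.
have [x0W y0W xy01 psi_x0 psi_y0] := JB_mono j0 j0B.
have [J [J_uniq J_size J_JB]] :
    exists J, [/\ uniq J, size J = (m - 2)%N & {subset J <= JB :\ j0}].
  by apply: uniq_seq_of_card_ge; move: many_B; rewrite (cardsD1 j0 JB) j0B; lia.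
have J_mono j : j \in J -> j \in JB by move/J_JB; rewrite in_setD1 => /andP[].
have j0_fresh w : w \in W -> copy j0 w \notin [seq copy j (pr j).1 | j <- J].
  move=> wW; apply/mapP => -[j jJ same].
  have [xW _ _ _ _] := JB_mono j (J_mono j jJ).
  by have := J_JB j jJ; rewrite (copy_inj wW xW same) in_setD1 eqxx.
pose s := copy j0 (pr j0).1 :: copy j0 (pr j0).2 :: [seq copy j (pr j).1 | j <- J].
exists [set` s].
  apply: mem_config_gons_copies => //.
  - exact: copy_in_config.
  - exact: copy_in_config.
  - by rewrite edistDr.
  - by move=> j /J_mono/JB_mono[].
  - exact: j0_fresh.
  - exact: j0_fresh.
have color_of v : v \in s -> psi v = B.
  by rewrite !inE => /orP[/eqP->|/orP[/eqP->|/mapP[j /J_mono/JB_mono[_ _ _ psi_j _] ->]]].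
by move=> u v /color_of-> /color_of->.
Qed.

Lemma config_monochromatic (C : finType) (psi : V -> C) :
  (#|C| <= k.+2)%N -> psi 0 = psi e -> exists2 Y, Y \in config_gons & monochromatic psi Y.
Proof.
move=> C_le psi_0e; have [many_good|few_good] := leqP (m - 2) #|good_copies psi|.
- exact: monochromatic_of_good_copies.
- exact: monochromatic_of_bad_copies.
Qed.

Lemma proper_H_of_config_gons_neq (C : finType) (phi : V -> C) (g : V -> V) :
  isometry g -> (#|C| <= k.+2)%N -> proper_coloring (H_of config_gons) phi ->
  phi (g 0) <> phi (g e).
Proof.
move=> g_iso C_le phi_proper same.
have [Y YS Y_mono] := config_monochromatic (psi := phi \o g) C_le same.
apply: (phi_proper (g @` Y)); first by exists Y => //; exists g.
by move=> _ _ [u Yu <-] [v Yv <-]; exact: Y_mono.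
Qed.

End Configuration.

Theorem corollary3p1p1 (R : realType) (d m : nat) (hd : (1 <= d)%N) (hm : (2 <= m)%N) :
  exists S : seq (set (pt R d)),
    (forall X, X \in S -> unit_m_gon m X) /\
    equivalent (H_of S) (@unit_distance_graph R d).
Proof.
pose i0 : 'I_d := Ordinal hd; pose e := delta_mx 0 i0 : pt R d.
have [n Gn] := exists_chromatic_number (@unit_distance_graph_colorable R d hd).
have [[c Gc] G_min] := Gn.
have [k n_eq] : exists k, n = k.+2.
  by exists n.-2; have := colorable_unit_distance_gt1 hd (ex_intro _ c Gc); lia.
subst n; have [W W_uncolorable] : exists W : seq (pt R d),
    forall psi : pt R d -> 'I_k.+1, ~ proper_on psi W.
  by apply: finite_uncolorable_subset => /G_min; rewrite ltnn.
exists (config_gons i0 k m W); split=> [X|]; first exact: config_gons_unit.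
apply: (equivalent_of_proper Gn) => [C phi|C phi C_le phi_proper].
  exact/proper_H_of_unit_m_gons/config_gons_unit.
apply/proper_unit_distanceP => x y /edist_eq1 xy1.
have [g [g_iso [<- <-]]] : exists g, isometry g /\ g 0 = x /\ g e = y.
  by apply: exists_isometry_pair; rewrite dot_delta -opprB dotNN xy1.
exact: proper_H_of_config_gons_neq W_uncolorable hm _ _ _ g_iso C_le phi_proper.
Qed.
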